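(* Let $k\ge1$, $G=(V,E)$ an inductively $k$-independent graph with $k$-independence ordering $v_1,\dots,v_n$, $f:2^V\to\mathbb{R}_{\ge0}$ submodular with $f(\emptyset)=0$, $\beta>0$ and $p\in(0,1)$. Run algorithm PD-RAND (described in the context). For each $i$, let $S_i$ be the (random) stack just before $v_i$ is processed, $B_i=N(v_i)\cap\{v_1,\dots,v_{i-1}\}$, $B_i'=B_i\cup\{v_i\}$, and $w(X)=\sum_{v_j\in X}w_j$. Then \[ \mathbb{E}\big[f_{S_i}(v_i)\,\mathbf{1}_{v_i\notin S_{\mathrm{end}}}\big]\le \max\Big\{\frac{1-p}{p},\,1+\beta\Big\}\,\mathbb{E}\big[w(B_i'\cap S_{\mathrm{end}})\big]. \]
   Context: $N(v)$ is the neighbourhood of $v$ (excluding $v$); $G$ is inductively $k$-independent with $k$-independence ordering $v_1,\dots,v_n$ if for every $i$, $G[N(v_i)\cap\{v_i,\dots,v_n\}]$ has no independent set of size more than $k$. For $S\subseteq V$, $f_S(v)=f(S\cup\{v\})-f(S)$. Algorithm PD-RAND (parameters $\beta>0$, $p\in(0,1)$). Phase 1: start with $S=\emptyset$ (a stack) and $w_1=\dots=w_n=0$. For $i=1,\dots,n$: let $C_i=N(v_i)\cap S$ for the current $S$; if $f_S(v_i)>(1+\beta)\sum_{v_j\in C_i}w_j$, then with probability $p$ (independently of all else) set $w_i=f_S(v_i)-\sum_{v_j\in C_i}w_j$ (with $S$ the set before insertion) and push $v_i$ onto $S$; in all other cases leave $w_i=0$ and do not add $v_i$. Let $S_{\mathrm{end}}$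 be $S$ at the end of Phase 1. Phase 2: with $S_{\mathrm{out}}=\emptyset$, pop vertices of $S_{\mathrm{end}}$ in reverse insertion order, adding a popped $v$ to $S_{\mathrm{out}}$ whenever $S_{\mathrm{out}}\cup\{v\}$ is independent. Output $S_{\mathrm{out}}$. *)

From HB Require Import structures.
From mathcomp Require Import all_boot all_order all_algebra.
Set Implicit Arguments. Unset Strict Implicit. Unset Printing Implicit Defensive.
Import Order.TTheory GRing.Theory Num.Theory.
Local Open Scope ring_scope.

(* Vertices are 'I_n; the vertex v_{i+1} of the paper is the ordinal i, so
   the k-independence ordering v_1,...,v_n is the natural order of 'I_n. *)

Definition simple_graph (n : nat) (e : rel 'I_n) : Prop :=
  symmetric e /\ irreflexive e.

Definition nbhd (n : nat) (e : rel 'I_n) (v : 'I_n) : {set 'I_n} :=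
  [set u | e v u].

Definition independent (n : nat) (e : rel 'I_n) (I : {set 'I_n}) : Prop :=
  forall x y, x \in I -> y \in I -> x != y -> ~~ e x y.

Definition inductively_k_independent (n : nat) (e : rel 'I_n) (k : nat) : Prop :=
  forall i : 'I_n, forall I : {set 'I_n},
    I \subset nbhd e i :&: [set j : 'I_n | (i <= j)%N] ->
    independent e I -> (#|I| <= k)%N.

Definition submodular (R : realFieldType) (n : nat) (f : {set 'I_n} -> R) : Prop :=
  forall A B : {set 'I_n}, f (A :|: B) + f (A :&: B) <= f A + f B.

Definition marg (R : realFieldType) (n : nat) (f : {set 'I_n} -> R)
  (S : {set 'I_n}) (v : 'I_n) : R := f (v |: S) - f S.

Definition wsum (R : realFieldType) (n : nat) (w : {ffun 'I_n -> R})
  (X : {set 'I_n}) : R := \sum_(j in X) w j.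

(* Randomness of PD-RAND: independent Bernoulli(p) coins, one per vertex,
   pre-sampled; coin i is the coin flipped (if at all) when v_i is processed. *)
Definition coins (n : nat) := {ffun 'I_n -> bool}.

Definition coin_prob (R : realFieldType) (n : nat) (p : R) (c : coins n) : R :=
  \prod_(i : 'I_n) (if c i then p else 1 - p).

Definition expect (R : realFieldType) (n : nat) (p : R) (X : coins n -> R) : R :=
  \sum_(c : coins n) coin_prob p c * X c.

(* One step of Phase 1 of PD-RAND, processing vertex i with coin b.
   The state is (current stack contents as a set, weights w). *)
Definition pd_step (R : realFieldType) (n : nat) (e : rel 'I_n)
  (f : {set 'I_n} -> R) (beta : R) (b : bool)
  (st : {set 'I_n} * {ffun 'I_n -> R}) (i : 'I_n)
  : {set 'I_n} * {ffun 'I_n -> R} :=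
  let S := st.1 in let w := st.2 in
  let C := nbhd e i :&: S in
  if (marg f S i > (1 + beta) * wsum w C) && b then
    (i |: S, [ffun j => if j == i then marg f S i - wsum w C else w j])
  else st.

Fixpoint pd_phase1 (R : realFieldType) (n : nat) (e : rel 'I_n)
  (f : {set 'I_n} -> R) (beta : R) (c : coins n) (m : nat)
  : {set 'I_n} * {ffun 'I_n -> R} :=
  match m with
  | 0 => (set0, [ffun => 0])
  | m'.+1 =>
      let st := pd_phase1 e f beta c m' in
      match (insub m' : option 'I_n) with
      | Some i => pd_step e f beta (c i) st i
      | None => st
      end
  end.

Definition stack_before (R : realFieldType) (n : nat) (e : rel 'I_n)
  (f : {set 'I_n} -> R) (beta : R) (c : coins n) (i : 'I_n) : {set 'I_n} :=
  (pd_phase1 e f beta c i).1.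

Definition S_end (R : realFieldType) (n : nat) (e : rel 'I_n)
  (f : {set 'I_n} -> R) (beta : R) (c : coins n) : {set 'I_n} :=
  (pd_phase1 e f beta c n).1.

Definition w_end (R : realFieldType) (n : nat) (e : rel 'I_n)
  (f : {set 'I_n} -> R) (beta : R) (c : coins n) : {ffun 'I_n -> R} :=
  (pd_phase1 e f beta c n).2.

Definition Bprime (n : nat) (e : rel 'I_n) (i : 'I_n) : {set 'I_n} :=
  i |: (nbhd e i :&: [set j : 'I_n | (j < i)%N]).

(* Only the coin of v_i matters.  Flipping it does not change the state S_i, w
   before v_i is processed, and later steps change neither the membership of
   v_i nor the weights on B_i' (vertices up to v_i), so it suffices to
   compare the two outcomes of that coin for a fixed state.  Write m = f_{S_i}(v_i)
   and W = w(N(v_i) ∩ S_i) = w(B_i' ∩ S_i).  If m <= (1 + beta) W, v_i is rejected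
   either way and both sides are m and W.  Otherwise heads pushes v_i with
   w_i = m - W, so B_i' collects weight exactly m, while tails loses m; and
   (1 - p) m = ((1 - p) / p) p m. *)

From mathcomp Require Import all_boot all_order all_algebra.
From mathcomp Require Import lra.
Import Order.TTheory GRing.Theory Num.Theory.
Local Open Scope ring_scope.

Section Phase1.
Context {R : realFieldType} {n : nat} (e : rel 'I_n) (f : {set 'I_n} -> R) (beta : R).
Implicit Types (c : coins n) (st : {set 'I_n} * {ffun 'I_n -> R}).

Lemma pd_phase1S c (i : 'I_n) :
  pd_phase1 e f beta c i.+1 = pd_step e f beta (c i) (pd_phase1 e f beta c i) i.
Proof.
rewrite /=; case: insubP => [j _ ji|]; last by rewrite ltn_ord.
by rewrite (val_inj ji).
Qed.

Lemma eq_pd_phase1 c c' m :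
  (forall j : 'I_n, (j < m)%N -> c j = c' j) ->
  pd_phase1 e f beta c m = pd_phase1 e f beta c' m.
Proof.
elim: m => [|m IHm] cc' //=.
rewrite IHm => [|j /ltnW]; last exact: cc'.
by case: insubP => [j _ jm|] //; rewrite cc' // jm.
Qed.

Lemma pd_phase1_sub c m :
  (pd_phase1 e f beta c m).1 \subset [set j : 'I_n | (j < m)%N].
Proof.
elim: m => [|m IHm] /=; first exact: sub0set.
have IHm' : (pd_phase1 e f beta c m).1 \subset [set j : 'I_n | (j < m.+1)%N].
  by apply: subset_trans IHm _; apply/subsetP => j; rewrite !inE => /ltnW.
case: insubP => [i _ im|//]; rewrite /pd_step; case: ifP => // _ /=.
by rewrite subUset sub1set inE im ltnSn IHm'.
Qed.

Lemma pd_step_other b st {i j : 'I_n} : j != i ->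
  (j \in (pd_step e f beta b st i).1) = (j \in st.1) /\
  (pd_step e f beta b st i).2 j = st.2 j.
Proof.
by move=> ji; rewrite /pd_step; case: ifP => _ //=; rewrite ffunE in_setU1 (negbTE ji).
Qed.

Lemma pd_phase1_stable c {m1 m2 : nat} {j : 'I_n} : (m1 <= m2)%N -> (j < m1)%N ->
  (j \in (pd_phase1 e f beta c m2).1) = (j \in (pd_phase1 e f beta c m1).1) /\
  (pd_phase1 e f beta c m2).2 j = (pd_phase1 e f beta c m1).2 j.
Proof.
move=> + jm1; elim: m2 => [|m2 IHm2]; first by rewrite leqn0 => /eqP->.
rewrite leq_eqVlt => /orP[/eqP-> //|m1m2].
have [IH1 IH2] := IHm2 m1m2; rewrite /=; case: insubP => [i _ im2|_] //.
have ji : j != i by rewrite -val_eqE im2 neq_ltn (leq_trans jm1 m1m2).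
by have [-> ->] := pd_step_other (c i) (pd_phase1 e f beta c m2) ji.
Qed.

Lemma pd_phase1_w_ge0 c m (j : 'I_n) : 0 <= beta -> 0 <= (pd_phase1 e f beta c m).2 j.
Proof.
move=> beta_ge0; elim: m j => [|m IHm] j /=; first by rewrite ffunE.
case: insubP => [i _ _|_]; last exact: IHm.
rewrite /pd_step; case: ifP => [/andP[accept _]|_] /=; last exact: IHm.
rewrite ffunE; case: (j == i); last exact: IHm.
set W := wsum _ _ in accept *.
have : 0 <= beta * W by apply: mulr_ge0 => //; apply: sumr_ge0.
lra.
Qed.

Lemma Bprime_setI_prefix {S : {set 'I_n}} {i : 'I_n} :
  S \subset [set j : 'I_n | (j < i)%N] -> Bprime e i :&: S = nbhd e i :&: S.
Proof.
move=> S_lt; apply/setP => j; rewrite /Bprime !inE.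
case jS: (j \in S); rewrite ?andbF // andbT.
have := subsetP S_lt _ jS; rewrite inE => ji.
by rewrite ji andbT -val_eqE (ltn_eqF ji).
Qed.

Lemma in_S_end c (i : 'I_n) :
  (i \in S_end e f beta c) = (i \in (pd_phase1 e f beta c i.+1).1).
Proof. by have [] := pd_phase1_stable c (ltn_ord i) (ltnSn i). Qed.

Lemma wsum_end_Bprime c (i : 'I_n) :
  wsum (w_end e f beta c) (Bprime e i :&: S_end e f beta c) =
  wsum (pd_phase1 e f beta c i.+1).2 (Bprime e i :&: (pd_phase1 e f beta c i.+1).1).
Proof.
have frozen j : j \in Bprime e i ->
    ((j \in S_end e f beta c) = (j \in (pd_phase1 e f beta c i.+1).1)) /\
    (w_end e f beta c j = (pd_phase1 e f beta c i.+1).2 j).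
  move=> jB; apply: pd_phase1_stable (ltn_ord i) _.
  by move: jB; rewrite /Bprime !inE => /orP[/eqP-> //|/andP[_ /ltnW]].
apply: eq_big => j; rewrite !in_setI.
  by case/boolP: (j \in Bprime e i) => // /frozen [].
by case/andP => /frozen [].
Qed.

Definition pd_step_loss st (i : 'I_n) (b : bool) : R :=
  marg f st.1 i * (i \notin (pd_step e f beta b st i).1)%:R.

Definition pd_step_credit st (i : 'I_n) (b : bool) : R :=
  wsum (pd_step e f beta b st i).2 (Bprime e i :&: (pd_step e f beta b st i).1).

Lemma pd_step_coin_bound (p M : R) st (i : 'I_n) :
  0 <= beta -> 0 < p -> p < 1 -> (1 - p) / p <= M -> 1 + beta <= M ->
  st.1 \subset [set j : 'I_n | (j < i)%N] -> (forall j, 0 <= st.2 j) ->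
  (1 - p) * pd_step_loss st i false + p * pd_step_loss st i true <=
  M * ((1 - p) * pd_step_credit st i false + p * pd_step_credit st i true).
Proof.
move=> beta_ge0 p_gt0 p_lt1 M_ge_odds M_ge_beta S_lt w_ge0.
have iS : i \notin st.1 by apply/negP => /(subsetP S_lt); rewrite inE ltnn.
have BS := Bprime_setI_prefix S_lt.
rewrite /pd_step_loss /pd_step_credit.
set m := marg f st.1 i; set W := wsum st.2 (nbhd e i :&: st.1).
have W_ge0 : 0 <= W by apply: sumr_ge0.
have M_ge0 : 0 <= M by lra.
have -> : pd_step e f beta false st i = st by rewrite /pd_step andbF.
rewrite (negbTE iS) BS -/W mulr1 /pd_step andbT -/m -/W.
case: ltP => [accept|reject] /=; last first.
  rewrite (negbTE iS) BS -/W mulr1 -!mulrDl subrK !mul1r.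
  by apply: le_trans reject _; apply: ler_wpM2r.
have -> : Bprime e i :&: (i |: st.1) = i |: (nbhd e i :&: st.1).
  by rewrite setIUr BS; congr (_ :|: _); apply/setIidPr; rewrite sub1set setU11.
rewrite setU11 mulr0 mulr0 addr0 /wsum big_setU1 /=; last by rewrite inE (negbTE iS) andbF.
rewrite ffunE eqxx (eq_bigr (fun j => st.2 j)) -/W; last first.
  move=> j; rewrite !inE ffunE => /andP[_ jS].
  have ji : j != i by apply: contraNneq iS => <-.
  by rewrite (negbTE ji).
rewrite subrK.
have m_ge0 : 0 <= m by have := mulr_ge0 beta_ge0 W_ge0; lra.
have odds : (1 - p) * m = (1 - p) / p * (p * m) by rewrite mulrA divfK ?lt0r_neq0.
rewrite odds [M * _]mulrDr; apply: ler_wpDl.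
  by rewrite !mulr_ge0 // subr_ge0 ltW.
by rewrite ler_wpM2r // mulr_ge0 // ltW.
Qed.

End Phase1.

Definition flip_coin {n : nat} (i : 'I_n) (c : coins n) : coins n :=
  [ffun j => if j == i then ~~ c j else c j].

Lemma flip_coinK {n : nat} (i : 'I_n) : involutive (flip_coin i).
Proof. by move=> c; apply/ffunP => j; rewrite !ffunE; case: eqP => // _; rewrite negbK. Qed.

Lemma flip_coin_other {n : nat} {i j : 'I_n} (c : coins n) :
  j != i -> flip_coin i c j = c j.
Proof. by rewrite ffunE => /negbTE->. Qed.

Lemma coin_prob_split {R : realFieldType} {n : nat} (p : R) (i : 'I_n) (c : coins n) :
  coin_prob p c =
  (if c i then p else 1 - p) * \prod_(j | j != i) (if c j then p else 1 - p).
Proof. exact: bigD1. Qed.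

Lemma expect_le_flip_coin {R : realFieldType} {n : nat} (p M : R) (i : 'I_n)
    (X Y : coins n -> R) :
  0 <= p <= 1 ->
  (forall c : coins n, c i = false ->
     (1 - p) * X c + p * X (flip_coin i c) <=
     M * ((1 - p) * Y c + p * Y (flip_coin i c))) ->
  expect p X <= M * expect p Y.
Proof.
move=> /andP[p_ge0 p_le1] XY.
pose pair (Z : coins n -> R) (c : coins n) :=
  coin_prob p c * Z c + coin_prob p (flip_coin i c) * Z (flip_coin i c).
have expect_pair Z : expect p Z *+ 2 = \sum_c pair Z c.
  have sum_flip (g : coins n -> R) : \sum_c g (flip_coin i c) = \sum_c g c.
    exact/esym/reindex_inj/inv_inj/flip_coinK.
  by rewrite big_split /= (sum_flip (fun c => coin_prob p c * Z c)) mulr2n.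
have pairXY c : pair X c <= M * pair Y c.
  wlog ci : c / c i = false => [wlog_ci|].
    case ci: (c i); last exact: wlog_ci.
    have := wlog_ci (flip_coin i c); rewrite /pair flip_coinK ffunE eqxx ci.
    by rewrite addrC [_ * Y _ + _]addrC; apply.
  have flipQ : \prod_(j | j != i) (if flip_coin i c j then p else 1 - p) =
               \prod_(j | j != i) (if c j then p else 1 - p).
    by apply: eq_bigr => j ji; rewrite flip_coin_other.
  rewrite /pair !(coin_prob_split p i) flipQ ffunE eqxx ci /=.
  set Q := \prod_(j | j != i) _.
  have Q_ge0 : 0 <= Q by apply: prodr_ge0 => j _; case: (c j); lra.
  have := ler_wpM2l Q_ge0 (XY c ci); rewrite !mulrDr; lra.
rewrite -(ler_pMn2r (ltn0Sn 1)) -mulrnAr !expect_pair mulr_sumr.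
exact: ler_sum.
Qed.

Theorem lemma8 (R : realFieldType) (n : nat) (e : rel 'I_n) (k : nat)
  (f : {set 'I_n} -> R) (beta p : R) (i : 'I_n) :
  (1 <= k)%N ->
  simple_graph e ->
  inductively_k_independent e k ->
  (forall A : {set 'I_n}, 0 <= f A) ->
  f set0 = 0 ->
  submodular f ->
  0 < beta -> 0 < p -> p < 1 ->
  expect p (fun c => marg f (stack_before e f beta c i) i *
                     (i \notin S_end e f beta c)%:R)
  <= Num.max ((1 - p) / p) (1 + beta) *
     expect p (fun c => wsum (w_end e f beta c) (Bprime e i :&: S_end e f beta c)).
Proof.
move=> _ _ _ _ _ _ beta_gt0 p_gt0 p_lt1.
apply: (expect_le_flip_coin _ _ i) => [|c ci]; first by rewrite !ltW.
have same_prefix : pd_phase1 e f beta (flip_coin i c) i = pd_phase1 e f beta c i.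
  by apply: eq_pd_phase1 => j ji; rewrite flip_coin_other // -val_eqE neq_ltn ji.
rewrite /stack_before !in_S_end !wsum_end_Bprime !pd_phase1S same_prefix.
rewrite ffunE eqxx ci.
apply: (pd_step_coin_bound e f beta _ _ _ _ (ltW beta_gt0) p_gt0 p_lt1).
- by rewrite le_max lexx.
- by rewrite le_max lexx orbT.
- exact: pd_phase1_sub.
- by move=> j; apply: pd_phase1_w_ge0; rewrite ltW.
Qed.
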